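(* Let $D$ be a reduced knot diagram, let $2\le k\le\infty$, and let $\boldsymbol\ell$ be a null pattern of the game matrix $M$ of some version of the $k$-color region select game on $D$. Then there exists $s\in\mathbb{Z}_k$ such that $\sigma_{\boldsymbol\ell}(e)\in\{s,-s\}$ for every edge $e$ of $D$. Moreover, let $e_1,e_2$ be any two edges that meet at a common vertex and are not incident to a common region. Then $\sigma_{\boldsymbol\ell}(e_1)=s$ if and only if $\sigma_{\boldsymbol\ell}(e_2)=-s$.
   Context: Diagrams: a link (knot) diagram $D$ is the underlying graph of a regular projection of a link (knot) into $S^2$. Its vertices are the crossings, each of valence 4, and over/under information is ignored. Components without crossings are closed loops, each regarded as one edge with no vertices. Regions of $D$ are the connected components of $S^2\setminus D$. A vertex or edge is incident to a region if it lies in the boundary of that region. Two regions are adjacent if they are incident to a common edge. A vertex $v$ is reducible if some circle in $S^2$ meets $D$ transversely only at $v$, and irreducible otherwise. An irreducible vertex is incident to four distinct regions. A reducible vertex $v$ is incident to exactly three regions $r_0,r_1,r_2$, where $r_0$ touches $v$ from two sides and $r_1,r_2$ touch it from one side. A knot diagram with $n$ vertices has $n+2$ regions. A knot diagram is reduced if all its vertices are irreducible. Ring: for an integer $k\ge2$ let $\mathbb{Z}_k=\mathbb{Z}/k\mathbb{Z}$, and for $k=\infty$ let $\mathbb{Z}_\infty=\mathbb{Z}$. Game versions: a version of the $k$-color region select game on $D$ is a choice of an increment number $a(v,r)\in\mathbb{Z}_k$ for every incident vertex–region pair, subject to the following rules. - If $k<\infty$ and $v$ is irreducible, then $a(v,r)=a_v$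 is the same for all regions $r$ incident to $v$, and $a_v$ is not a zero divisor of $\mathbb{Z}_k$. - If $k<\infty$ and $v$ is reducible, then $a(v,r_0)$ is arbitrary, while $a(v,r_1)$ and $a(v,r_2)$ are not zero divisors. - If $k=\infty$, then $a(v,r)=1$, except that $a(v,r_0)\in\mathbb{Z}$ is arbitrary when $v$ is reducible. - The original game is the version in which all increment numbers equal $1$. Game matrix: enumerate the vertices as $v_1,\dots,v_n$ and the regions as $r_1,\dots,r_m$. The game matrix is the $n\times m$ matrix $M$ over $\mathbb{Z}_k$ with $M_{ij}=a(v_i,r_j)$ if $v_i$ is incident to $r_j$, and $M_{ij}=0$ otherwise. Patterns and configurations: a push pattern is a vector $\mathbf p\in\mathbb{Z}_k^m$, and $\mathbf p(r_j)=p_j$ is the number of times $r_j$ is pushed. A region $r$ is not pushed in $\mathbf p$ if $\mathbf p(r)=0$. A color configuration is a vector $\mathbf c\in\mathbb{Z}_k^n$. Applying $\mathbf p$ to $\mathbf c$ yields $\mathbf c+M\mathbf p$. The configuration $\mathbf c$ is solvable if some $\mathbf p$ satisfies $M\mathbf p=-\mathbf c$; such a $\mathbf p$ is a solving pattern for $\mathbf c$. $D$ is always solvable in the version if every $\mathbf c\in\mathbb{Z}_k^n$ is solvable. A null pattern is an element of $Ker_k(M)=\{\mathbf p\in\mathbb{Z}_k^m: M\mathbf p=0\}$. Push number: for a push pattern $\mathbf p$ and an edge $e$ incident to regions $r,r'$, the push number of $e$ is $\sigma_{\mathbf p}(e)=\mathbf p(r)+\mathbf p(r')\in\mathbb{Z}_k$.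 *)

From HB Require Import structures.
From mathcomp Require Import all_boot all_order all_fingroup all_algebra.
Set Implicit Arguments. Unset Strict Implicit. Unset Printing Implicit Defensive.
Import GRing.Theory.
Local Open Scope ring_scope.

(* A diagram with at least one crossing is encoded as a combinatorial map
   (rotation system) on a finite set T of darts (half-edges):
   - [sig] rotates the darts cyclically around their vertex (crossing);
   - [alp] is the fixed-point-free involution pairing the two darts of an edge;
   - regions (faces) are the orbits of [d |-> sig (alp d)].
   Dart d corresponds to the corner at its vertex between sig^-1 d and d, and
   this corner lies in the region (face orbit) containing d. *)

Definition orbit_set (T : finType) (f : T -> T) (x : T) : {set T} :=
  [set y | fconnect f x y].
Definition orbits (T : finType) (f : T -> T) : {set {set T}} :=
  [set orbit_set f x | x : T].

Section Diagram.
Variable T : finType.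
Variables (sig alp : {perm T}).

Definition face_step (d : T) : T := sig (alp d).
(* straight-ahead continuation of a strand through the next crossing *)
Definition strand_step (d : T) : T := sig (sig (alp d)).

Definition vertices : {set {set T}} := orbits sig.
Definition edges : {set {set T}} := orbits alp.
Definition regions : {set {set T}} := orbits face_step.
Definition region_of (d : T) : {set T} := orbit_set face_step d.

Definition is_knot_diagram : Prop :=
  [/\ (forall d, alp (alp d) = d /\ alp d != d),
      (forall d, #|orbit_set sig d| = 4%N),
      (forall x y, connect (fun a b => (b == sig a) || (b == alp a)) x y),
      (* spherical (genus 0): V - E + F = 2 *)
      (#|vertices| + #|regions| = #|edges| + 2)%N &
      (* a single component: the straight-ahead walk has exactly two orbits
         (the two orientations of the one strand) *)
      #|orbits strand_step| = 2%N].

Definition incident_vr (v r : {set T}) : bool := ~~ [disjoint v & r].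
Definition incident_er (e r : {set T}) : bool := ~~ [disjoint e & r].

(* A vertex is irreducible iff it is incident to four distinct regions,
   i.e. its four corners lie in pairwise distinct regions. *)
Definition irreducible (v : {set T}) : bool :=
  [forall d in v, forall d' in v, (d != d') ==> (region_of d != region_of d')].

Definition reduced : Prop := forall v, v \in vertices -> irreducible v.

(* number of sides from which region r touches vertex v *)
Definition touch (v r : {set T}) : nat := #|v :&: r|.

Section Game.
Variable R : pzRingType.

Definition not_zero_divisor (x : R) : Prop := forall y : R, x * y = 0 -> y = 0.

(* versions of the k-color game, k finite (R = Z_k) *)
Definition finite_version (a : {set T} -> {set T} -> R) : Prop :=
  forall v, v \in vertices ->
    (irreducible v -> exists c, not_zero_divisor c /\
        forall r, r \in regions -> incident_vr v r -> a v r = c) /\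
    (~~ irreducible v -> forall r, r \in regions -> incident_vr v r ->
        touch v r = 1%N -> not_zero_divisor (a v r)).

(* versions for k = infinity (R = Z) *)
Definition infinite_version (a : {set T} -> {set T} -> R) : Prop :=
  forall v, v \in vertices -> forall r, r \in regions -> incident_vr v r ->
    irreducible v || (touch v r == 1%N) -> a v r = 1.

(* game matrix entries, rows = vertices, columns = regions *)
Definition game_matrix (a : {set T} -> {set T} -> R) (v r : {set T}) : R :=
  if incident_vr v r then a v r else 0.

(* push patterns are functions on regions (values elsewhere are irrelevant) *)
Definition null_pattern (a : {set T} -> {set T} -> R) (p : {set T} -> R) : Prop :=
  forall v, v \in vertices -> \sum_(r in regions) game_matrix a v r * p r = 0.

(* push number of an edge e = {d, alp d}: p(region of d) + p(region of alp d),
   i.e. the sum of p over the two regions on the two sides of e *)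
Definition push_number (p : {set T} -> R) (e : {set T}) : R :=
  \sum_(d in e) p (region_of d).

Definition meet_at_vertex (e1 e2 : {set T}) : Prop :=
  exists v, v \in vertices /\ ~~ [disjoint v & e1] /\ ~~ [disjoint v & e2].

Definition common_region (e1 e2 : {set T}) : Prop :=
  exists r, r \in regions /\ incident_er e1 r /\ incident_er e2 r.

Definition push_conclusion (p : {set T} -> R) : Prop :=
  exists s : R,
    (forall e, e \in edges -> push_number p e = s \/ push_number p e = - s) /\
    (forall e1 e2, e1 \in edges -> e2 \in edges ->
       meet_at_vertex e1 e2 -> ~ common_region e1 e2 ->
       (push_number p e1 = s <-> push_number p e2 = - s)).

End Game.
End Diagram.

From mathcomp Require Import all_boot all_order all_fingroup all_algebra.
Set Implicit Arguments. Unset Strict Implicit. Unset Printing Implicit Defensive.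
Import GRing.Theory.
Local Open Scope ring_scope.

(** At a reduced crossing the four corners lie in four distinct regions, so the
    row of the game matrix is a non-zero-divisor times the sum of the pattern
    over these regions, and a null pattern sums to zero around every crossing.
    The push number of the edge leaving a dart [x] is [l (R x) + l (R (sig x))];
    the vanishing vertex sums make it change sign when a strand passes straight
    through a crossing, and it is the same from both ends of an edge.  Following
    the single strand of the knot therefore only ever meets [s] and [-s].  Two
    edges at a crossing without a common region are opposite there, so their
    push numbers are exactly [s] and [-s]. *)

Lemma not_disjointP (T : finType) (A B : {set T}) :
  reflect (exists2 x, x \in A & x \in B) (~~ [disjoint A & B]).
Proof.
rewrite -setI_eq0; apply: (iffP (set0Pn _)) => [[x]|[x xA xB]].
  by rewrite inE => /andP[]; exists x.
by exists x; rewrite inE xA.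
Qed.

Lemma orbit_set_eq (T : finType) (f : T -> T) x y :
  injective f -> y \in orbit_set f x -> orbit_set f x = orbit_set f y.
Proof.
move=> f_inj; rewrite inE => xy; apply/setP => z; rewrite !inE.
apply: same_connect; [exact: fconnect_sym | exact: xy].
Qed.

Section KnotDiagram.
Variables (T : finType) (sig alp : {perm T}).
Hypothesis alp_fpf_invol : forall d, alp (alp d) = d /\ alp d != d.
Hypothesis sig_orbit_card : forall d, #|orbit_set sig d| = 4%N.

Local Notation R := (region_of sig alp).
Local Notation st := (strand_step sig alp).

Lemma order_sig d : fingraph.order sig d = 4%N.
Proof. by rewrite -(sig_orbit_card d) cardsE. Qed.

Lemma orbit_sig d : fingraph.orbit sig d = [:: d; sig d; sig (sig d); sig (sig (sig d))].
Proof. by rewrite /fingraph.orbit order_sig. Qed.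

Lemma sig4 d : sig (sig (sig (sig d))) = d.
Proof. by have := iter_order (@perm_inj _ sig) d; rewrite order_sig. Qed.

Lemma sig2_neq d : sig (sig d) != d.
Proof.
have := orbit_uniq sig d; rewrite orbit_sig /= !inE.
by case/and4P=> /norP[_ /norP[]]; rewrite eq_sym.
Qed.

Lemma mem_vertex d y : (y \in orbit_set sig d) = (y \in fingraph.orbit sig d).
Proof. by rewrite inE fconnect_orbit. Qed.

Lemma mem_edge d y : (y \in orbit_set alp d) = (y \in [:: d; alp d]).
Proof.
rewrite inE (@fconnect_cycle _ _ [:: d; alp d]) ?mem_head //=.
by rewrite (alp_fpf_invol d).1 !eqxx.
Qed.

Lemma face_step_inj : injective (face_step sig alp).
Proof. exact: inj_comp (@perm_inj _ sig) (@perm_inj _ alp). Qed.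

Lemma mem_region_of d : d \in R d.
Proof. by rewrite inE connect0. Qed.

Lemma region_of_in_regions d : R d \in regions sig alp.
Proof. exact: imset_f. Qed.

Lemma region_of_alp x : R (alp x) = R (sig x).
Proof.
apply/setP => y; rewrite !inE (same_fconnect1 face_step_inj (alp x)).
by rewrite /face_step (alp_fpf_invol x).1.
Qed.

Lemma region_of_face_step x : R (sig (alp x)) = R x.
Proof. by apply/setP => y; rewrite !inE (same_fconnect1 face_step_inj x). Qed.

Definition corner_push (K : pzRingType) (l : {set T} -> K) x :=
  l (R x) + l (R (sig x)).

Lemma push_number_edge (K : pzRingType) (l : {set T} -> K) x :
  push_number sig alp l (orbit_set alp x) = corner_push l x.
Proof.
rewrite /push_number (eq_bigl (mem [:: x; alp x])) => [|y]; last exact: mem_edge.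
rewrite -big_uniq /=; last by rewrite inE eq_sym (alp_fpf_invol x).2.
by rewrite !big_cons big_nil addr0 region_of_alp.
Qed.

Lemma strand_step_alp y : st (alp (st y)) = alp y.
Proof. by rewrite /strand_step (alp_fpf_invol _).1 sig4. Qed.

Lemma iter_strand_alp d i k :
  iter (i + k) st d = alp d -> iter i st d = alp (iter k st d).
Proof.
elim: i k => [|i IHi] k; first by rewrite add0n => ->; rewrite (alp_fpf_invol d).1.
by rewrite addSnnS => /IHi IH; rewrite iterS IH iterS strand_step_alp.
Qed.

(* By [iter_strand_alp] a strand from [d] to [alp d] is its own reversal, so its middle
   would be a dart [e] with [alp e = e] (even length) or one with
   [sig (sig (alp e)) = alp e] (odd length). *)
Lemma strand_not_reversed d : ~~ fconnect st d (alp d).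
Proof.
apply/negP => /iter_findex; set j := findex _ _ _.
rewrite -(odd_double_half j) -addnn; set h := j./2.
case: (odd j).
  rewrite add1n -addSn => /iter_strand_alp; rewrite iterS => turn.
  by have := sig2_neq (alp (iter h st d)); rewrite [X in X != _]turn eqxx.
rewrite add0n => /iter_strand_alp turn.
by have := (alp_fpf_invol (iter h st d)).2; rewrite -turn eqxx.
Qed.

Lemma strand_cover (strands2 : #|orbits st| = 2%N) d x :
  fconnect st d x || fconnect st (alp d) x.
Proof.
pose O := orbit_set st.
have memO y z : (z \in O y) = fconnect st y z by rewrite inE.
have O_neq : O d != O (alp d).
  apply: contraNneq (strand_not_reversed d) => Od.
  by rewrite -memO Od memO connect0.
have orbitsE : orbits st = [set O d; O (alp d)].
  apply/esym/eqP; rewrite eqEcard strands2 cards2 O_neq leqnn andbT.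
  by apply/subsetP => o; rewrite !inE => /orP[] /eqP ->; apply: imset_f.
have : O x \in orbits st by apply: imset_f.
rewrite orbitsE !inE => /orP[] /eqP Ox.
  by rewrite -memO -Ox memO connect0.
by rewrite -[fconnect st (alp d) x]memO -Ox memO connect0 orbT.
Qed.

(* Every other corner at the crossing shares a region with the edge of [x]. *)
Lemma opposite_of_no_common_region x y :
  y \in orbit_set sig x ->
  ~ common_region sig alp (orbit_set alp x) (orbit_set alp y) ->
  y = sig (sig x).
Proof.
have in_edge u : u \in orbit_set alp u by rewrite mem_edge mem_head.
have in_edge_alp u : alp u \in orbit_set alp u by rewrite mem_edge !inE eqxx orbT.
move=> xy no_common; have shared u u1 u2 : u1 \in orbit_set alp x ->
    u1 \in R u -> u2 \in orbit_set alp y -> u2 \in R u -> False.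
  move=> u1x u1r u2y u2r; apply: no_common; exists (R u).
  by split; [apply: region_of_in_regions | split; apply/not_disjointP; eauto].
move: xy; rewrite mem_vertex orbit_sig !inE => /or4P[] /eqP xy //.
- by case: (shared x x x); rewrite -?xy ?mem_region_of.
- case: (shared (sig x) (alp x) y) => //; first by rewrite -region_of_alp mem_region_of.
  by rewrite xy mem_region_of.
- case: (shared x x (alp y)); rewrite ?mem_region_of //.
  by rewrite -[x in R x](sig4 x) -xy -region_of_alp mem_region_of.
Qed.

Section VanishingVertexSums.
Variables (K : pzRingType) (l : {set T} -> K).
Hypothesis vertex_sum0 : forall x, corner_push l x + corner_push l (sig (sig x)) = 0.

Lemma corner_push_sig2 x : corner_push l (sig (sig x)) = - corner_push l x.
Proof. by apply/eqP; rewrite -addr_eq0 addrC vertex_sum0. Qed.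

Lemma corner_push_alp x : corner_push l (alp x) = corner_push l x.
Proof. by rewrite /corner_push region_of_alp region_of_face_step addrC. Qed.

Lemma corner_push_strand x : corner_push l (st x) = - corner_push l x.
Proof. by rewrite /strand_step corner_push_sig2 corner_push_alp. Qed.

Lemma corner_push_connect z y : fconnect st z y ->
  corner_push l y = corner_push l z \/ corner_push l y = - corner_push l z.
Proof.
move=> /iter_findex <-; elim: findex => [|n IHn]; first by left.
by rewrite iterS corner_push_strand; case: IHn => ->; [right | left; rewrite opprK].
Qed.

Lemma push_conclusion_of_vertex_sums :
  #|orbits st| = 2%N -> push_conclusion sig alp l.
Proof.
move=> strands2; case: (pickP (fun _ : T => true)) => [d _|T0]; last first.
  by exists 0; split=> [e|e1 e2] /imsetP[x]; have := T0 x.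
exists (corner_push l d); split.
  move=> _ /imsetP[x _ ->]; rewrite push_number_edge.
  case/orP: (strand_cover strands2 d x) => /corner_push_connect //.
  by rewrite corner_push_alp.
move=> _ _ /imsetP[w1 _ ->] /imsetP[w2 _ ->] [_ [/imsetP[z _ ->] []]].
case/not_disjointP=> x zx /(orbit_set_eq (@perm_inj _ alp)) ->.
case/not_disjointP=> y zy /(orbit_set_eq (@perm_inj _ alp)) ->.
rewrite (orbit_set_eq (@perm_inj _ sig) zx) in zy.
move/(opposite_of_no_common_region zy) ->.
by rewrite !push_number_edge corner_push_sig2; split=> [->|/oppr_inj].
Qed.

End VanishingVertexSums.

Lemma incident_region_of v r :
  r \in regions sig alp -> incident_vr v r = (r \in R @: v).
Proof.
case/imsetP=> w _ ->; apply/not_disjointP/imsetP => [[u uv uw]|[u uv ->]].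
  by exists u; rewrite // (orbit_set_eq face_step_inj uw).
by exists u; rewrite ?mem_region_of.
Qed.

Lemma game_row_sum (K : pzRingType) a (l : {set T} -> K) v :
  \sum_(r in regions sig alp) game_matrix a v r * l r = \sum_(r in R @: v) a v r * l r.
Proof.
rewrite big_mkcond [RHS]big_mkcond; apply: eq_bigr => r _; rewrite /game_matrix.
have [rR|rR] := boolP (r \in regions sig alp).
  by rewrite incident_region_of //; case: ifP; rewrite ?mul0r.
by case: ifP => // /imsetP[u _ ru]; rewrite ru region_of_in_regions in rR.
Qed.

Lemma vertex_sum0_of_null_row (K : pzRingType) a (l : {set T} -> K) x
    (v := orbit_set sig x) :
  irreducible sig alp v ->
  \sum_(r in regions sig alp) game_matrix a v r * l r = 0 ->
  (exists c, not_zero_divisor c /\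
     forall r, r \in regions sig alp -> incident_vr v r -> a v r = c) ->
  corner_push l x + corner_push l (sig (sig x)) = 0.
Proof.
move=> irr row0 [c [c_nzd a_c]]; move: row0; rewrite game_row_sum big_imset /=.
  rewrite (eq_bigr (fun u => c * l (R u))) => [|u uv]; last first.
    rewrite a_c ?region_of_in_regions //.
    by apply/not_disjointP; exists u => //; exact: mem_region_of.
  rewrite -mulr_sumr => /c_nzd.
  rewrite (eq_bigl (mem (fingraph.orbit sig x))) => [|u]; last exact: mem_vertex.
  rewrite -big_uniq ?orbit_uniq // orbit_sig !big_cons big_nil.
  by rewrite /= /corner_push addr0 !addrA.
move=> u1 u2 u1v u2v; move/forall_inP: irr => /(_ u1 u1v)/forall_inP/(_ u2 u2v).
by case: eqVneq => // _ /= /eqP.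
Qed.

Lemma push_conclusion_of_null_pattern (K : pzRingType) a (l : {set T} -> K) :
  #|orbits st| = 2%N -> reduced sig alp -> null_pattern sig alp a l ->
  (forall v, v \in vertices sig -> exists c, not_zero_divisor c /\
     forall r, r \in regions sig alp -> incident_vr v r -> a v r = c) ->
  push_conclusion sig alp l.
Proof.
move=> strands2 red null a_const; apply: push_conclusion_of_vertex_sums strands2 => x.
have vV : orbit_set sig x \in vertices sig by apply: imset_f.
exact: vertex_sum0_of_null_row (red _ vV) (null _ vV) (a_const _ vV).
Qed.

End KnotDiagram.

Theorem mainTheorem4 (T : finType) (sig alp : {perm T}) :
  is_knot_diagram sig alp -> reduced sig alp ->
  (forall (k : nat) (a : {set T} -> {set T} -> 'Z_k) (l : {set T} -> 'Z_k),
      (1 < k)%N -> finite_version sig alp a -> null_pattern sig alp a l ->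
      push_conclusion sig alp l) /\
  (forall (a : {set T} -> {set T} -> int) (l : {set T} -> int),
      infinite_version sig alp a -> null_pattern sig alp a l ->
      push_conclusion sig alp l).
Proof.
move=> [alp_fpf_invol sig_orbit_card _ _ strands2] red.
have conclude :=
  push_conclusion_of_null_pattern alp_fpf_invol sig_orbit_card strands2 red.
split=> [k a l _ fin_version | a l inf_version] /conclude; apply=> v vV.
  exact: (fin_version v vV).1 (red v vV).
exists 1; split=> [y|r rR vr]; first by rewrite mul1r.
by rewrite inf_version // red.
Qed.
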